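(* Let $\sigma\in(\tfrac12,1)$ be fixed. There is a constant $B=B(\sigma)>0$ such that for every prime $p$ and every real $k>0$: (i) $\displaystyle\sum_{\nu\ge0}\frac{d_{k/2}(p^\nu)^2}{p^{2\nu\sigma}}=I_0\Big(\frac{k}{p^\sigma}\Big)\exp\Big\{E_1\Big\}$ with $|E_1|\le B\,k/p^{2\sigma}$; (ii) if moreover $p\le k^{1/\sigma}$, then $\displaystyle\sum_{\nu\ge0}\frac{d_{k/2}(p^\nu)^2}{p^{2\nu\sigma}}=\exp\{E_2\}$ with $|E_2|\le B\,k/p^{\sigma}$.
   Context: For real $z>0$, $d_z(n)$ is the generalized divisor function, defined by $\zeta(s)^z=\sum_{n\ge1}d_z(n)n^{-s}$ ($\Re s>1$); it is multiplicative with $d_z(p^\nu)=\frac{\Gamma(z+\nu)}{\Gamma(z)\,\nu!}$. $I_0(t):=\int_0^1\exp(t\cos(2\pi\theta))\,d\theta=\sum_{n\ge0}\frac{(t/2)^{2n}}{(n!)^2}$ is the modified Bessel function of order $0$. *)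

From Stdlib Require Import Reals ZArith Znumtheory.
From Coquelicot Require Import Coquelicot.
Open Scope R_scope.

(* rising factorial z (z+1) ... (z+n-1) = Gamma(z+n)/Gamma(z) *)
Fixpoint rising (z : R) (n : nat) : R :=
  match n with
  | O => 1
  | S m => rising z m * (z + INR m)
  end.

(* d_z(p^nu) = Gamma(z+nu) / (Gamma(z) nu!) *)
Definition dz_pow (z : R) (nu : nat) : R := rising z nu / INR (fact nu).

Definition I0 (t : R) : R :=
  Series (fun n => (t / 2) ^ (2 * n) / (INR (fact n)) ^ 2).

From Stdlib Require Import Reals ZArith Znumtheory Lia Lra.
From Coquelicot Require Import Coquelicot.
Open Scope R_scope.

(* With [u = p^-sigma] and [z = k/2], the series is [sum c_n^2] where [c_n = d_z(p^n) u^n] are the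
   Taylor coefficients of [(1 - u X)^(-z)], while [I0 (k / p^sigma) = sum e_n^2] with [e_n] those of
   [exp (z u X)].  Factor [(1 - u X)^(-z) = exp (z u X) g(X)]: the coefficients of [g] are
   nonnegative and sum to at most [g(1) <= exp (z u^2 / (2 (1 - u)))], by a Gronwall argument for
   [g' = z u^2 X g / (1 - u X)] on [0, 1].  Then [c_n >= e_n] termwise, and Cauchy-Schwarz gives
   [sum c_n^2 <= g(1)^2 sum e_n^2].  As [u^2 <= 1/2] and [I0 t <= exp t], this yields
   [0 <= E1 = O(k u^2)] and [0 <= E2 = O(k u)]. *)

Lemma PS_incr_1_0 (a : nat -> R) : PS_incr_1 a 0 = 0.
Proof. reflexivity. Qed.

Lemma PS_incr_1_derive (a : nat -> R) n : PS_incr_1 (PS_derive a) n = INR n * a n.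
Proof. destruct n as [|n]; [rewrite PS_incr_1_0; simpl; ring | reflexivity]. Qed.

Lemma PS_mult_incr_1_r (a b : nat -> R) n :
  PS_mult a (PS_incr_1 b) n = PS_incr_1 (PS_mult a b) n.
Proof.
  destruct n as [|n]; [exact (Rmult_0_r _)|].
  unfold PS_mult; simpl PS_incr_1 at 2.
  rewrite tech5, Nat.sub_diag; simpl PS_incr_1 at 2.
  rewrite Rmult_0_r, Rplus_0_r.
  apply sum_eq; intros i hi.
  replace (S n - i)%nat with (S (n - i)) by lia; reflexivity.
Qed.

Lemma PS_mult_derive (a b : nat -> R) n :
  PS_derive (PS_mult a b) n = PS_mult (PS_derive a) b n + PS_mult a (PS_derive b) n.
Proof.
  unfold PS_derive at 1, PS_mult at 1; rewrite scal_sum.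
  transitivity (sum_f_R0 (fun i => INR i * a i * b (S n - i)%nat) (S n)
    + sum_f_R0 (fun i => a i * (INR (S n - i) * b (S n - i)%nat)) (S n)).
  { rewrite <- plus_sum; apply sum_eq; intros i hi.
    replace (INR (S n)) with (INR i + INR (S n - i)) by (rewrite <- plus_INR; f_equal; lia).
    ring. }
  f_equal.
  - rewrite decomp_sum by lia; simpl pred.
    rewrite Rmult_0_l, Rmult_0_l, Rplus_0_l; reflexivity.
  - rewrite tech5, Nat.sub_diag; change (INR 0) with 0.
    rewrite Rmult_0_l, Rmult_0_r, Rplus_0_r.
    apply sum_eq; intros i hi.
    replace (S n - i)%nat with (S (n - i)) by lia; reflexivity.
Qed.

Lemma PS_mult_lin_r (a b c : nat -> R) (x y : R) n :
  PS_mult a (fun m => x * b m + y * c m) n = x * PS_mult a b n + y * PS_mult a c n.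
Proof.
  unfold PS_mult; rewrite !scal_sum, <- plus_sum.
  apply sum_eq; intros i _; ring.
Qed.

(* Coefficientwise, [(1 - u X) f' = t f]: its solutions are the multiples of [(1 - u X)^(-t/u)]. *)
Definition binomial_ode (u t : R) (f : nat -> R) : Prop :=
  forall n, PS_derive f n - u * PS_incr_1 (PS_derive f) n = t * f n.

Lemma binomial_ode_unique u t f g :
  binomial_ode u t f -> binomial_ode u t g -> f 0%nat = g 0%nat -> forall n, f n = g n.
Proof.
  intros hf hg h0 n; induction n as [|n IH]; [exact h0|].
  specialize (hf n); specialize (hg n).
  rewrite PS_incr_1_derive in hf, hg; unfold PS_derive in hf, hg.
  apply (Rmult_eq_reg_l (INR (S n))); [|apply not_0_INR; lia].
  rewrite IH in hf; lra.
Qed.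

Lemma dz_pow_binomial_ode z u : binomial_ode u (z * u) (fun n => dz_pow z n * u ^ n).
Proof.
  intros n; rewrite PS_incr_1_derive; unfold PS_derive, dz_pow.
  simpl rising; rewrite fact_simpl, mult_INR; simpl pow.
  field; split; apply not_0_INR; [apply fact_neq_0 | lia].
Qed.

Lemma binomial_ode_PS_mult u t e b :
  (forall n, PS_derive e n = t * e n) ->
  (forall n, PS_derive b n - u * PS_incr_1 (PS_derive b) n = t * u * PS_incr_1 b n) ->
  binomial_ode u t (PS_mult e b).
Proof.
  intros he hb n.
  assert (hd : forall m, PS_derive (PS_mult e b) m = t * PS_mult e b m + PS_mult e (PS_derive b) m).
  { intros m; rewrite PS_mult_derive; f_equal.
    unfold PS_mult; rewrite scal_sum; apply sum_eq; intros i _; rewrite he; ring. }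
  assert (hXd : t * PS_incr_1 (PS_mult e b) n + PS_mult e (PS_incr_1 (PS_derive b)) n
                = PS_incr_1 (PS_derive (PS_mult e b)) n).
  { rewrite PS_mult_incr_1_r; destruct n as [|n];
      [rewrite !PS_incr_1_0; ring | symmetry; apply hd]. }
  assert (hb' : PS_mult e (PS_derive b) n - u * PS_mult e (PS_incr_1 (PS_derive b)) n
                = t * u * PS_incr_1 (PS_mult e b) n).
  { rewrite <- PS_mult_incr_1_r.
    transitivity (PS_mult e (fun m => 1 * PS_derive b m + (- u) * PS_incr_1 (PS_derive b) m) n);
      [rewrite PS_mult_lin_r; ring|].
    transitivity (PS_mult e (fun m => t * u * PS_incr_1 b m + 0 * b m) n);
      [|rewrite PS_mult_lin_r; ring].
    unfold PS_mult; apply sum_eq; intros i _; rewrite <- hb; ring. }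
  rewrite hd, <- hXd; lra.
Qed.

Definition exp_coef (t : R) (n : nat) : R := t ^ n / INR (fact n).

Lemma PS_derive_exp_coef t n : PS_derive (exp_coef t) n = t * exp_coef t n.
Proof.
  unfold PS_derive, exp_coef; rewrite fact_simpl, mult_INR; simpl pow.
  field; split; apply not_0_INR; [apply fact_neq_0 | lia].
Qed.

Lemma exp_coef_nonneg t n : 0 <= t -> 0 <= exp_coef t n.
Proof.
  intros ht; unfold exp_coef; apply Rmult_le_pos; [now apply pow_le|].
  apply Rlt_le, Rinv_0_lt_compat, lt_0_INR, lt_O_fact.
Qed.

(* Taylor coefficients of [exp (- t X) * (1 - u X)^(-t/u)] for [lam = t u]; since the logarithmic
   derivative of this function is [lam X / (1 - u X)], they are determined by
   [(1 - u X) f' = lam X f] and [f 0 = 1]. *)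
Fixpoint corr (u lam : R) (n : nat) : R :=
  match n with
  | O => 1
  | S O => 0
  | S ((S m) as m1) => (u * INR m1 * corr u lam m1 + lam * corr u lam m) / INR (S m1)
  end.

Lemma corr_ode u lam n :
  PS_derive (corr u lam) n - u * PS_incr_1 (PS_derive (corr u lam)) n
  = lam * PS_incr_1 (corr u lam) n.
Proof.
  rewrite PS_incr_1_derive; destruct n as [|n].
  - rewrite PS_incr_1_0; unfold PS_derive; simpl; ring.
  - unfold PS_derive; change (corr u lam (S (S n)))
      with ((u * INR (S n) * corr u lam (S n) + lam * corr u lam n) / INR (S (S n))).
    simpl PS_incr_1; field; apply not_0_INR; lia.
Qed.

Lemma corr_nonneg u lam : 0 <= u -> 0 <= lam -> forall n, 0 <= corr u lam n.
Proof.
  intros hu hl.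
  assert (h : forall n, 0 <= corr u lam n /\ 0 <= corr u lam (S n)).
  { induction n as [|n [IH1 IH2]]; [simpl; lra|]; split; [exact IH2|].
    change (corr u lam (S (S n)))
      with ((u * INR (S n) * corr u lam (S n) + lam * corr u lam n) / INR (S (S n))).
    pose proof (pos_INR (S n)); pose proof (lt_0_INR (S (S n)) ltac:(lia)).
    apply Rdiv_le_0_compat; [|lra].
    apply Rplus_le_le_0_compat; apply Rmult_le_pos; try apply Rmult_le_pos; lra. }
  intros n; apply h.
Qed.

(* [f x * exp (- L x^2 / 2)] has a nonpositive derivative on [0, 1]. *)
Lemma gronwall_linear (f f' : R -> R) (L : R) :
  (forall x, 0 <= x <= 1 -> derivable_pt_lim f x (f' x)) ->
  (forall x, 0 <= x <= 1 -> f' x <= L * x * f x) ->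
  f 1 <= f 0 * exp (L / 2).
Proof.
  intros hder hle.
  set (w := fun x => exp (- (L * x ^ 2 / 2))).
  set (H := fun x => f x * w x).
  set (H' := fun x => (f' x - L * x * f x) * w x).
  destruct (MVT_cor3 H H' 0 1 Rlt_0_1) as [c [hc0 [hc1 hc]]].
  { intros x hx0 hx1; apply is_derive_Reals.
    assert (hw : is_derive w x (w x * (- (L * x)))).
    { unfold w; auto_derive; [easy|]. field_simplify. f_equal; f_equal; field. }
    assert (hf : is_derive f x (f' x)) by (apply is_derive_Reals, hder; lra).
    replace (H' x) with (f' x * w x + f x * (w x * - (L * x))) by (unfold H'; ring).
    exact (is_derive_mult f w x _ _ hf hw Rmult_comm). }
  assert (hH' : H' c <= 0).
  { unfold H'; pose proof (hle c (conj hc0 hc1)); pose proof (exp_pos (- (L * c ^ 2 / 2))).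
    fold (w c) in *; nra. }
  assert (hw0 : w 0 = 1)
    by (unfold w; cbv beta; replace (- (L * 0 ^ 2 / 2)) with 0 by field; apply exp_0).
  assert (hw1 : w 1 * exp (L / 2) = 1)
    by (unfold w; cbv beta; rewrite <- exp_plus;
        replace (- (L * 1 ^ 2 / 2) + L / 2) with 0 by field; apply exp_0).
  assert (hH : H 1 <= H 0) by lra.
  unfold H in hH; rewrite hw0 in hH.
  pose proof (exp_pos (L / 2)).
  replace (f 1) with (f 1 * w 1 * exp (L / 2)) by (rewrite Rmult_assoc, hw1; ring).
  apply Rmult_le_compat_r; lra.
Qed.

Lemma sum_PS_incr_1_pow (a : nat -> R) (x : R) N :
  sum_f_R0 (fun k => PS_incr_1 a k * x ^ k) (S N) = x * sum_f_R0 (fun k => a k * x ^ k) N.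
Proof.
  rewrite decomp_sum by lia; simpl pred; rewrite PS_incr_1_0, Rmult_0_l, Rplus_0_l, scal_sum.
  apply sum_eq; intros i _; simpl; ring.
Qed.

Section CorrSum.

Variables (u lam : R).
Hypotheses (hu : 0 <= u < 1) (hlam : 0 <= lam).

Let b := corr u lam.

Lemma corr_poly_deriv_le x N : 0 <= x <= 1 ->
  sum_f_R0 (fun k => PS_derive b k * x ^ k) N
  <= lam / (1 - u) * x * sum_f_R0 (fun k => b k * x ^ k) (S N).
Proof.
  intros hx.
  assert (hb : forall n, 0 <= b n) by (apply corr_nonneg; lra).
  assert (hb' : forall n, 0 <= PS_derive b n)
    by (intros n; apply Rmult_le_pos; [apply pos_INR | apply hb]).
  set (D := sum_f_R0 (fun k => PS_derive b k * x ^ k) N).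
  set (G := sum_f_R0 (fun k => b k * x ^ k) (S N)).
  assert (hD : 0 <= D)
    by (apply cond_pos_sum; intros; apply Rmult_le_pos; [apply hb' | apply pow_le; lra]).
  assert (hXb : sum_f_R0 (fun k => PS_incr_1 b k * x ^ k) N <= x * G).
  { apply Rle_trans with (sum_f_R0 (fun k => PS_incr_1 b k * x ^ k) (S N)).
    - rewrite tech5; simpl PS_incr_1.
      pose proof (Rmult_le_pos _ _ (hb N) (pow_le x (S N) ltac:(lra))); lra.
    - rewrite sum_PS_incr_1_pow; unfold G; rewrite tech5.
      pose proof (Rmult_le_pos _ _ (hb (S N)) (pow_le x (S N) ltac:(lra))); nra. }
  (* the ODE [(1 - u X) b' = lam X b], truncated at degree [N] *)
  assert (hode : (1 - u * x) * D + u * PS_derive b N * x ^ S N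
                 = lam * sum_f_R0 (fun k => PS_incr_1 b k * x ^ k) N).
  { transitivity (D - u * (x * D) + u * PS_derive b N * x ^ S N); [ring|].
    unfold D; rewrite <- sum_PS_incr_1_pow, tech5; simpl (PS_incr_1 _ (S N)).
    transitivity (sum_f_R0 (fun k => PS_derive b k * x ^ k) N
      - u * sum_f_R0 (fun k => PS_incr_1 (PS_derive b) k * x ^ k) N); [ring|].
    rewrite !scal_sum, <- minus_sum; apply sum_eq; intros k _.
    transitivity ((PS_derive b k - u * PS_incr_1 (PS_derive b) k) * x ^ k); [ring|].
    unfold b; rewrite corr_ode; ring. }
  assert (0 <= u * (1 - x) * D) by (apply Rmult_le_pos; [apply Rmult_le_pos|]; lra).
  assert (0 <= u * PS_derive b N * x ^ S N)
    by (apply Rmult_le_pos; [apply Rmult_le_pos; [lra | apply hb'] | apply pow_le; lra]).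
  assert (lam * sum_f_R0 (fun k => PS_incr_1 b k * x ^ k) N <= lam * (x * G))
    by (apply Rmult_le_compat_l; assumption).
  apply (Rmult_le_reg_l (1 - u)); [lra|].
  replace ((1 - u) * (lam / (1 - u) * x * G)) with (lam * (x * G)) by (field; lra).
  lra.
Qed.

Lemma corr_sum_le N : sum_f_R0 b N <= exp (lam / (1 - u) / 2).
Proof.
  assert (hb : forall n, 0 <= b n) by (apply corr_nonneg; lra).
  set (f := fun x => sum_f_R0 (fun k => b k * x ^ k) (S N)).
  assert (hf : f 1 <= f 0 * exp (lam / (1 - u) / 2)).
  { apply (gronwall_linear f (fun x => sum_f_R0 (fun k => PS_derive b k * x ^ k) N)).
    - intros x _; exact (derivable_pt_lim_finite_sum b x (S N)).
    - intros x hx; exact (corr_poly_deriv_le x N hx). }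
  assert (hf0 : f 0 = 1).
  { unfold f; rewrite decomp_sum by lia; rewrite sum_eq_R0; [unfold b; simpl; ring|].
    intros k _; simpl; ring. }
  assert (hf1 : f 1 = sum_f_R0 b (S N)) by (apply sum_eq; intros; rewrite pow1; ring).
  rewrite hf0, hf1, Rmult_1_l, tech5 in hf.
  specialize (hb (S N)); lra.
Qed.

End CorrSum.

Lemma sum_f_R0_cauchy_schwarz (a w : nat -> R) N : (forall i, 0 <= w i) ->
  (sum_f_R0 (fun i => a i * w i) N) ^ 2
  <= sum_f_R0 (fun i => a i ^ 2 * w i) N * sum_f_R0 w N.
Proof.
  intros hw; induction N as [|N IH]; [simpl; specialize (hw 0%nat); nra|].
  rewrite !tech5.
  set (A := sum_f_R0 (fun i => a i * w i) N) in *.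
  set (C := sum_f_R0 (fun i => a i ^ 2 * w i) N) in *.
  set (W := sum_f_R0 w N) in *.
  assert (hW : 0 <= W) by (apply cond_pos_sum; exact hw).
  assert (hC : 0 <= C)
    by (apply cond_pos_sum; intros i; apply Rmult_le_pos; [apply pow2_ge_0 | apply hw]).
  specialize (hw (S N)); set (x := a (S N)) in *; set (y := w (S N)) in *.
  assert (hx2 : x ^ 2 * A ^ 2 <= x ^ 2 * (C * W))
    by (apply Rmult_le_compat_l; [apply pow2_ge_0 | lra]).
  pose proof (pow2_ge_0 (C - x ^ 2 * W)).
  assert (hsq : (2 * x * A) ^ 2 <= (C + x ^ 2 * W) ^ 2) by nra.
  assert (hq : 0 <= C + x ^ 2 * W) by (pose proof (pow2_ge_0 x); nra).
  assert (key : 2 * x * A <= C + x ^ 2 * W)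
    by (destruct (Rle_lt_dec (2 * x * A) (C + x ^ 2 * W)); [assumption | nra]).
  nra.
Qed.

Lemma sum_f_R0_sq_le (a : nat -> R) N : (forall n, 0 <= a n) ->
  sum_f_R0 (fun n => a n ^ 2) N <= (sum_f_R0 a N) ^ 2.
Proof.
  intros ha; induction N as [|N IH]; [simpl; nra|]; rewrite !tech5.
  assert (0 <= sum_f_R0 a N) by (apply cond_pos_sum; exact ha).
  specialize (ha (S N)); nra.
Qed.

Lemma nonneg_series_bounded (a : nat -> R) (M : R) :
  (forall n, 0 <= a n) -> (forall N, sum_f_R0 a N <= M) -> ex_series a /\ Series a <= M.
Proof.
  intros ha hM.
  assert (hincr : forall n, sum_n a n <= sum_n a (S n))
    by (intros n; rewrite !sum_n_Reals, tech5; specialize (ha (S n)); lra).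
  destruct (ex_finite_lim_seq_incr (sum_n a) M hincr) as [l hl];
    [intros n; rewrite sum_n_Reals; apply hM|].
  split; [exists l; exact hl|].
  rewrite (is_series_unique a l hl).
  apply (is_lim_seq_le (sum_n a) (fun _ => M) l M); [|exact hl | apply is_lim_seq_const].
  intros n; rewrite sum_n_Reals; apply hM.
Qed.

Lemma sum_f_R0_le_Series (a : nat -> R) N :
  (forall n, 0 <= a n) -> ex_series a -> sum_f_R0 a N <= Series a.
Proof.
  intros ha [l hl]; rewrite (is_series_unique a l hl), <- sum_n_Reals.
  apply (is_lim_seq_incr_compare _ l hl).
  intros n; rewrite !sum_n_Reals, tech5; specialize (ha (S n)); lra.
Qed.

Lemma Series_PS_mult_sq_le (a w : nat -> R) :
  (forall n, 0 <= w n) -> ex_series (fun n => a n ^ 2) -> ex_series w ->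
  ex_series (fun n => PS_mult a w n ^ 2)
  /\ Series (fun n => PS_mult a w n ^ 2) <= Series w ^ 2 * Series (fun n => a n ^ 2).
Proof.
  intros hw [A2 hA2] hW.
  set (W := Series w).
  assert (hpt : forall n, PS_mult a w n ^ 2 <= W * PS_mult (fun i => a i ^ 2) w n).
  { intros n; unfold PS_mult.
    eapply Rle_trans; [apply (sum_f_R0_cauchy_schwarz a (fun i => w (n - i)%nat)); auto|].
    rewrite (sum_f_R0_skip w), Rmult_comm; apply Rmult_le_compat_r.
    - apply cond_pos_sum; intros; apply Rmult_le_pos; [apply pow2_ge_0 | apply hw].
    - apply sum_f_R0_le_Series; assumption. }
  assert (hser : is_series (fun n => W * PS_mult (fun i => a i ^ 2) w n) (W * (A2 * W))).
  { exact (is_series_scal_l W _ _ (is_series_mult_pos _ _ _ _ hA2 (Series_correct _ hW)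
                                     (fun n => pow2_ge_0 (a n)) hw)). }
  assert (hex : ex_series (fun n => PS_mult a w n ^ 2)).
  { apply (@ex_series_le R_AbsRing R_CompleteNormedModule _
             (fun n => W * PS_mult (fun i => a i ^ 2) w n)); [|eexists; exact hser].
    intros n; change norm with Rabs; rewrite Rabs_pos_eq by apply pow2_ge_0; apply hpt. }
  split; [exact hex|].
  rewrite (is_series_unique _ _ hA2).
  replace (W ^ 2 * A2) with (W * (A2 * W)) by ring.
  rewrite <- (is_series_unique _ _ hser).
  apply Series_le; [|eexists; exact hser].
  intros n; split; [apply pow2_ge_0 | apply hpt].
Qed.

Lemma I0_series t : 0 <= t ->
  is_series (fun n => exp_coef (t / 2) n ^ 2) (I0 t) /\ 1 <= I0 t <= exp t.
Proof.
  intros ht.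
  set (e := exp_coef (t / 2)).
  assert (he : forall n, 0 <= e n) by (intros; apply exp_coef_nonneg; lra).
  assert (hI : I0 t = Series (fun n => e n ^ 2)).
  { apply Series_ext; intros n; unfold e, exp_coef.
    rewrite Nat.mul_comm, pow_mult; field; apply not_0_INR, fact_neq_0. }
  destruct (nonneg_series_bounded (fun n => e n ^ 2) (exp t)) as [hex hle].
  - intros; apply pow2_ge_0.
  - intros N; eapply Rle_trans; [apply sum_f_R0_sq_le; exact he|].
    replace (exp t) with (exp (t / 2) ^ 2)
      by (simpl; rewrite Rmult_1_r, <- exp_plus; f_equal; field).
    apply pow_incr; split; [apply cond_pos_sum; exact he | apply exp_ge_taylor; lra].
  - rewrite hI; split; [apply Series_correct, hex | split; [|exact hle]].
    replace 1 with (sum_f_R0 (fun n => e n ^ 2) 0) by (unfold e, exp_coef; simpl; field).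
    apply sum_f_R0_le_Series; [intros; apply pow2_ge_0 | exact hex].
Qed.

Lemma pow_le_rising z n : 0 <= z -> z ^ n <= rising z n.
Proof.
  intros hz; induction n as [|n IH]; simpl; [lra|].
  pose proof (pos_INR n); pose proof (pow_le z n hz); nra.
Qed.

Lemma dz_pow_sq_series z u : 0 < z -> 0 <= u < 1 ->
  ex_series (fun n => (dz_pow z n * u ^ n) ^ 2)
  /\ I0 (2 * z * u) <= Series (fun n => (dz_pow z n * u ^ n) ^ 2)
                    <= exp (z * u ^ 2 / (1 - u)) * I0 (2 * z * u).
Proof.
  intros hz hu.
  set (t := z * u); set (e := exp_coef t); set (b := corr u (t * u)).
  assert (ht : 0 <= t) by (unfold t; nra).
  assert (hb : forall n, 0 <= b n) by (apply corr_nonneg; unfold t; nra).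
  assert (hconv : forall n, dz_pow z n * u ^ n = PS_mult e b n).
  { apply binomial_ode_unique with u t; [apply dz_pow_binomial_ode|
      apply binomial_ode_PS_mult; [apply PS_derive_exp_coef | apply corr_ode]|].
    unfold PS_mult, e, b, dz_pow, exp_coef; simpl; field. }
  destruct (I0_series (2 * z * u)) as [hI [hI1 _]]; [unfold t in ht; lra|].
  replace (2 * z * u / 2) with t in hI by (unfold t; field); fold e in hI.
  destruct (nonneg_series_bounded b (exp (t * u / (1 - u) / 2)) hb) as [hbex hbS];
    [apply corr_sum_le; unfold t; nra|].
  destruct (Series_PS_mult_sq_le e b hb (ex_intro _ _ hI) hbex) as [hex hY].
  rewrite (is_series_unique _ _ hI) in hY.
  assert (hS : Series (fun n => (dz_pow z n * u ^ n) ^ 2) = Series (fun n => PS_mult e b n ^ 2))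
    by (apply Series_ext; intros; rewrite hconv; reflexivity).
  assert (hb0 : 0 <= Series b)
    by (eapply Rle_trans; [apply (hb 0%nat) | apply (sum_f_R0_le_Series b 0); auto]).
  split; [|split].
  - eapply ex_series_ext; [|exact hex]; intros n; rewrite hconv; reflexivity.
  - rewrite <- (is_series_unique _ _ hI), hS.
    apply Series_le; [|exact hex]; intros n; rewrite <- hconv; split; [apply pow2_ge_0|].
    apply pow_incr; split; [apply exp_coef_nonneg; exact ht|].
    replace (dz_pow z n * u ^ n) with (rising z n * u ^ n / INR (fact n))
      by (unfold dz_pow; field; apply not_0_INR, fact_neq_0).
    unfold e, exp_coef, t; rewrite Rpow_mult_distr; unfold Rdiv.
    apply Rmult_le_compat_r; [apply Rlt_le, Rinv_0_lt_compat, lt_0_INR, lt_O_fact|].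
    apply Rmult_le_compat_r; [apply pow_le; lra | apply pow_le_rising; lra].
  - rewrite hS; eapply Rle_trans; [exact hY|]; apply Rmult_le_compat_r; [lra|].
    replace (exp (z * u ^ 2 / (1 - u))) with (exp (t * u / (1 - u) / 2) ^ 2)
      by (simpl; rewrite Rmult_1_r, <- exp_plus; f_equal; unfold t; field; lra).
    apply pow_incr; lra.
Qed.

Lemma exp_le_mono x y : x <= y -> exp x <= exp y.
Proof. intros [h | ->]; [left; apply exp_increasing, h | right; reflexivity]. Qed.

Lemma dz_pow_sq_series_exp z u : 0 < z -> 0 <= u <= 3 / 4 ->
  (exists E1, is_series (fun n => (dz_pow z n * u ^ n) ^ 2) (I0 (2 * z * u) * exp E1)
              /\ 0 <= E1 <= 4 * z * u ^ 2)
  /\ (exists E2, is_series (fun n => (dz_pow z n * u ^ n) ^ 2) (exp E2)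
                 /\ 0 <= E2 <= 5 * z * u).
Proof.
  intros hz hu.
  destruct (dz_pow_sq_series z u hz ltac:(lra)) as [hex [hlo hup]].
  destruct (I0_series (2 * z * u)) as [_ [hI1 hIe]]; [nra|].
  set (S := Series (fun n => (dz_pow z n * u ^ n) ^ 2)) in *.
  set (I := I0 (2 * z * u)) in *.
  assert (hLam : z * u ^ 2 / (1 - u) <= 4 * z * u ^ 2).
  { apply (Rmult_le_reg_r (1 - u)); [lra|].
    unfold Rdiv; rewrite Rmult_assoc, Rinv_l by lra.
    assert (hzu : 0 <= z * u ^ 2) by (apply Rmult_le_pos; [lra | apply pow2_ge_0]).
    pose proof (Rmult_le_pos _ (3 - 4 * u) hzu ltac:(lra)); lra. }
  assert (hS : S <= exp (4 * z * u ^ 2) * I).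
  { eapply Rle_trans; [exact hup|]; apply Rmult_le_compat_r; [lra|].
    apply exp_le_mono, hLam. }
  split.
  - exists (ln (S / I)); split.
    + rewrite exp_ln by (apply Rdiv_lt_0_compat; lra).
      replace (I * (S / I)) with S by (field; lra); apply Series_correct, hex.
    + rewrite <- ln_1, <- (ln_exp (4 * z * u ^ 2)).
      split; apply ln_le; try apply Rdiv_lt_0_compat; try lra.
      * apply (Rmult_le_reg_r I); [lra|]; unfold Rdiv; rewrite Rmult_assoc, Rinv_l; lra.
      * apply (Rmult_le_reg_r I); [lra|]; unfold Rdiv; rewrite Rmult_assoc, Rinv_l; lra.
  - exists (ln S); split; [rewrite exp_ln by lra; apply Series_correct, hex|].
    rewrite <- ln_1, <- (ln_exp (5 * z * u)).
    split; apply ln_le; try lra.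
    eapply Rle_trans; [exact hS|].
    replace (exp (5 * z * u))
      with (exp (4 * z * u ^ 2) * (exp (2 * z * u) * exp (z * u * (3 - 4 * u))))
      by (rewrite <- !exp_plus; f_equal; ring).
    apply Rmult_le_compat_l; [apply Rlt_le, exp_pos|].
    rewrite <- (Rmult_1_r I) at 1; apply Rmult_le_compat; [lra | lra | exact hIe |].
    rewrite <- exp_0; apply exp_le_mono, Rmult_le_pos; [apply Rmult_le_pos |]; lra.
Qed.

Lemma Rpower_mult_INR x a n : Rpower x (a * INR n) = Rpower x a ^ n.
Proof. rewrite <- Rpower_mult, Rpower_pow; [reflexivity | apply exp_pos]. Qed.

Lemma Rpower_sq_ge x s : 1 <= x -> 1 / 2 <= s -> x <= Rpower x s ^ 2.
Proof.
  intros hx hs; rewrite <- Rpower_mult_INR.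
  apply Rle_trans with (Rpower x 1); [rewrite Rpower_1; lra|].
  apply Rle_Rpower; [exact hx | simpl; lra].
Qed.

Lemma sq_div_Rpower_mult (c x s : R) nu :
  c ^ 2 / Rpower x (2 * INR nu * s) = (c * (/ Rpower x s) ^ nu) ^ 2.
Proof.
  replace (2 * INR nu * s) with (s * INR (nu * 2)) by (rewrite mult_INR; simpl; ring).
  rewrite Rpower_mult_INR, pow_inv, pow_mult.
  field; apply pow_nonzero, Rgt_not_eq, exp_pos.
Qed.

Theorem lemma2p1 (sigma : R) (hs1 : 1/2 < sigma) (hs2 : sigma < 1) :
  exists B : R, 0 < B /\
  forall (p : nat) (k : R), prime (Z.of_nat p) -> 0 < k ->
    (exists E1 : R,
       is_series (fun nu : nat => (dz_pow (k/2) nu) ^ 2 / Rpower (INR p) (2 * INR nu * sigma))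
                 (I0 (k / Rpower (INR p) sigma) * exp E1)
       /\ Rabs E1 <= B * k / Rpower (INR p) (2 * sigma))
    /\
    (INR p <= Rpower k (1 / sigma) ->
     exists E2 : R,
       is_series (fun nu : nat => (dz_pow (k/2) nu) ^ 2 / Rpower (INR p) (2 * INR nu * sigma))
                 (exp E2)
       /\ Rabs E2 <= B * k / Rpower (INR p) sigma).
Proof.
  exists 3; split; [lra|]; intros p k hp hk.
  set (P := Rpower (INR p) sigma).
  assert (hP : 0 < P) by apply exp_pos.
  assert (hP2 : Rpower (INR p) (2 * sigma) = P ^ 2)
    by (unfold P; rewrite <- Rpower_mult_INR; f_equal; simpl; ring).
  assert (hPge : 2 <= P ^ 2).
  { assert (hp2 : (2 <= p)%nat) by (pose proof (prime_ge_2 _ hp); lia).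
    apply le_INR in hp2; simpl in hp2.
    apply Rle_trans with (INR p); [lra | apply Rpower_sq_ge; lra]. }
  set (u := / P); set (z := k / 2).
  assert (hu : 0 <= u <= 3 / 4).
  { unfold u; split; [apply Rlt_le, Rinv_0_lt_compat, hP|].
    apply (Rmult_le_reg_l P); [exact hP|]; rewrite Rinv_r by lra; nra. }
  destruct (dz_pow_sq_series_exp z u) as [[E1 [h1 hE1]] [E2 [h2 hE2]]];
    [unfold z; lra | exact hu |].
  replace (2 * z * u) with (k / P) in h1 by (unfold z, u; field; lra).
  (* the bound in (ii) holds without the hypothesis [p <= k^(1/sigma)] *)
  split; [exists E1 | intros _; exists E2];
    (split; [eapply is_series_ext; [intros; symmetry; apply sq_div_Rpower_mult | assumption]|]);
    rewrite Rabs_pos_eq by lra.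
  - replace (4 * z * u ^ 2) with (2 * (k / P ^ 2)) in hE1 by (unfold z, u; field; lra).
    assert (0 < k / P ^ 2) by (apply Rdiv_lt_0_compat; lra).
    rewrite hP2; replace (3 * k / P ^ 2) with (3 * (k / P ^ 2)) by (field; lra); lra.
  - replace (5 * z * u) with (5 / 2 * (k / P)) in hE2 by (unfold z, u; field; lra).
    assert (0 < k / P) by (apply Rdiv_lt_0_compat; lra).
    replace (3 * k / P) with (3 * (k / P)) by (field; lra); lra.
Qed.
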